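(* Let $d\ge 3$ and for $x,y,z\in\mathbb S^{d-1}$ let $V(x,y,z)$ be the volume of the parallelepiped spanned by the vectors $x,y,z$, so that $V^2(x,y,z)=1-\langle y,z\rangle^2-\langle x,z\rangle^2-\langle x,y\rangle^2+2\langle y,z\rangle\langle x,z\rangle\langle x,y\rangle$. Then every isotropic probability measure on $\mathbb S^{d-1}$ maximizes $I_{V^2}(\mu)=\iiint V^2(x,y,z)\,d\mu(x)d\mu(y)d\mu(z)$ over $\mu\in\mathcal P(\mathbb S^{d-1})$.
   Context: $\mathbb S^{d-1}$ is the unit sphere in $\mathbb R^d$ and $\mathcal P(\mathbb S^{d-1})$ the set of Borel probability measures on it. $\mu$ is isotropic if $\int xx^T\,d\mu(x)=\frac1d I_d$. *)

From HB Require Import structures.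
From mathcomp Require Import all_boot all_order all_algebra.
From mathcomp Require Import all_classical all_reals all_analysis.
Set Implicit Arguments. Unset Strict Implicit. Unset Printing Implicit Defensive.
Import Order.TTheory GRing.Theory Num.Theory.
Import numFieldNormedType.Exports.
Local Open Scope classical_set_scope.
Local Open Scope ring_scope.

Definition Rd (R : realType) (d : nat) : measurableType _ :=
  g_sigma_algebraType (@open 'rV[R]_d).

Definition ip (R : realType) (d : nat) (x y : 'rV[R]_d) : R :=
  \sum_(i < d) x 0 i * y 0 i.

Definition sphere (R : realType) (d : nat) : set (Rd R d) :=
  [set x : 'rV[R]_d | ip x x = 1].

(* squared volume of the parallelepiped spanned by x, y, z (on the sphere) *)
Definition V2 (R : realType) (d : nat) (x y z : 'rV[R]_d) : R :=
  1 - (ip y z) ^+ 2 - (ip x z) ^+ 2 - (ip x y) ^+ 2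
    + 2 * ip y z * ip x z * ip x y.

Definition I_V2 (R : realType) (d : nat) (mu : {measure set (Rd R d) -> \bar R})
  : \bar R :=
  (\int[mu]_x \int[mu]_y \int[mu]_z (V2 x y z)%:E)%E.

(* isotropy: \int x x^T dmu = (1/d) I_d, written entrywise *)
Definition isotropic (R : realType) (d : nat) (mu : {measure set (Rd R d) -> \bar R})
  : Prop :=
  forall i j : 'I_d,
    (\int[mu]_x (x 0 i * x 0 j)%:E)%E = (((i == j)%:R / d%:R : R)%:E).

(* Integrating V^2 successively in z, y and x, each time as an affine function
   of the rank-one matrix w w^T, shows I_{V^2}(nu) = 1 - 3 tr M^2 + 2 tr M^3,
   where M = \int x x^T dnu is symmetric with trace 1 and 0 <= M <= I, and
   isotropy means M = I/d.  For d >= 4 the tangent-line identity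
   E(I/d) - E(M) = tr ((M - I/d)^2 ((3 - 4/d) I - 2 M)) gives the bound, since
   (3 - 4/d) I - 2 M >= 0.  For d = 3 the energy is 6 det M, which Hadamard's
   inequality and AM-GM bound by 6 (tr M / 3)^3. *)

From HB Require Import structures.
From mathcomp Require Import all_boot all_order all_algebra.
From mathcomp Require Import all_classical all_reals all_analysis.
From mathcomp Require Import ring lra measurable_realfun.
Import Order.TTheory GRing.Theory Num.Theory.
Import numFieldNormedType.Exports.
Set Implicit Arguments. Unset Strict Implicit. Unset Printing Implicit Defensive.
Local Open Scope classical_set_scope.
Local Open Scope ring_scope.

Section FrobeniusPairing.
Variables (R : comPzRingType) (d : nat).
Implicit Types (a b : 'rV[R]_d) (B C D : 'M[R]_d).

Definition mxdot B C : R := \sum_i \sum_j B i j * C i j.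

Definition outer a b : 'M[R]_d := \matrix_(i, j) (a 0 i * b 0 j).

Lemma mxdotC B C : mxdot B C = mxdot C B.
Proof. by apply: eq_bigr => i _; apply: eq_bigr => j _; rewrite mulrC. Qed.

Lemma mxdotDl B C D : mxdot (B + C) D = mxdot B D + mxdot C D.
Proof.
rewrite /mxdot -big_split; apply: eq_bigr => i _; rewrite -big_split.
by apply: eq_bigr => j _; rewrite !mxE mulrDl.
Qed.

Lemma mxdotNl B D : mxdot (- B) D = - mxdot B D.
Proof.
rewrite /mxdot -sumrN; apply: eq_bigr => i _; rewrite -sumrN.
by apply: eq_bigr => j _; rewrite !mxE mulNr.
Qed.

Lemma mxdotZl (k : R) B D : mxdot (k *: B) D = k * mxdot B D.
Proof.
rewrite /mxdot mulr_sumr; apply: eq_bigr => i _; rewrite mulr_sumr.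
by apply: eq_bigr => j _; rewrite !mxE mulrA.
Qed.

Lemma mxdotBl B C D : mxdot (B - C) D = mxdot B D - mxdot C D.
Proof. by rewrite mxdotDl mxdotNl. Qed.

Lemma mxdotDr B C D : mxdot D (B + C) = mxdot D B + mxdot D C.
Proof. by rewrite mxdotC mxdotDl !(mxdotC D). Qed.

Lemma mxdotNr B D : mxdot D (- B) = - mxdot D B.
Proof. by rewrite mxdotC mxdotNl mxdotC. Qed.

Lemma mxdotZr (k : R) B D : mxdot D (k *: B) = k * mxdot D B.
Proof. by rewrite mxdotC mxdotZl mxdotC. Qed.

Lemma mxdotBr B C D : mxdot D (B - C) = mxdot D B - mxdot D C.
Proof. by rewrite mxdotDr mxdotNr. Qed.

Lemma mxdot_scalar_l (k : R) C : mxdot k%:M C = k * \tr C.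
Proof.
rewrite /mxdot /mxtrace mulr_sumr; apply: eq_bigr => i _.
rewrite (bigD1 i) //= big1 ?addr0; first by rewrite !mxE eqxx mulr1n.
by move=> j /negPf ji; rewrite !mxE eq_sym ji mulr0n mul0r.
Qed.

Lemma mxdot_scalar_r (k : R) C : mxdot C k%:M = k * \tr C.
Proof. by rewrite mxdotC mxdot_scalar_l. Qed.

Lemma mxtrace_mulmx_mxdot B C : \tr (B *m C) = mxdot B C^T.
Proof.
rewrite /mxtrace /mxdot; apply: eq_bigr => i _; rewrite mxE.
by apply: eq_bigr => j _; rewrite !mxE.
Qed.

Lemma mxdot_gram_rows m (A : 'M[R]_(m, d)) B :
  mxdot (A^T *m A) B = \sum_k mxdot (outer (row k A) (row k A)) B.
Proof.
rewrite /mxdot.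
under eq_bigr do under eq_bigr do rewrite !mxE mulr_suml.
under eq_bigr do rewrite exchange_big.
rewrite exchange_big; apply: eq_bigr => k _; apply: eq_bigr => i _.
by apply: eq_bigr => j _; rewrite !mxE.
Qed.

End FrobeniusPairing.

Section InnerProduct.
Variables (R : realType) (d : nat).
Implicit Types (a b v x z : 'rV[R]_d) (C : 'M[R]_d).

Lemma ipC a b : ip a b = ip b a.
Proof. by apply: eq_bigr => i _; rewrite mulrC. Qed.

Lemma ip_ge0 x : 0 <= ip x x.
Proof. by apply: sumr_ge0 => i _; rewrite -expr2 sqr_ge0. Qed.

Lemma sqr_coord_le_ip x i : x 0 i ^+ 2 <= ip x x.
Proof.
rewrite /ip (bigD1 i) //= expr2 lerDl; apply: sumr_ge0 => k _.
by rewrite -expr2 sqr_ge0.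
Qed.

Lemma norm_coord_mul_le_ip x i j : `|x 0 i * x 0 j| <= ip x x.
Proof.
have hi := sqr_coord_le_ip x i; have hj := sqr_coord_le_ip x j.
rewrite -[x 0 i ^+ 2]real_normK ?num_real // in hi.
rewrite -[x 0 j ^+ 2]real_normK ?num_real // in hj.
rewrite normrM.
have := normr_ge0 (x 0 i); have := normr_ge0 (x 0 j); nra.
Qed.

Lemma cauchy_schwarz_ip v z : ip v z ^+ 2 <= ip v v * ip z z.
Proof.
have lagrange : \sum_i \sum_j (v 0 i * z 0 j - v 0 j * z 0 i) ^+ 2 =
    ip v v * ip z z + ip z z * ip v v - 2 * (ip v z * ip v z).
  rewrite /ip !big_distrlr /= mulr_sumr -big_split -sumrB; apply: eq_bigr => i _.
  by rewrite mulr_sumr -big_split -sumrB; apply: eq_bigr => j _ /=; ring.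
have : 0 <= \sum_i \sum_j (v 0 i * z 0 j - v 0 j * z 0 i) ^+ 2.
  by apply: sumr_ge0 => i _; apply: sumr_ge0 => j _; exact: sqr_ge0.
rewrite lagrange; lra.
Qed.

Lemma mxtrace_outer a b : \tr (outer a b) = ip a b.
Proof. by apply: eq_bigr => i _; rewrite mxE. Qed.

Lemma mxdot_outer a b C : mxdot (outer a b) C = ip a (b *m C^T).
Proof.
apply: eq_bigr => i _; rewrite mxE mulr_sumr.
by apply: eq_bigr => j _; rewrite !mxE; ring.
Qed.

Lemma ip_mul_mxdot_outer a b z : ip a z * ip b z = mxdot (outer a b) (outer z z).
Proof.
rewrite /ip /mxdot big_distrlr /=; apply: eq_bigr => i _; apply: eq_bigr => j _.
by rewrite !mxE; ring.
Qed.

End InnerProduct.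

Section SecondMoment.
Variables (R : realType) (d : nat).

Lemma measurable_coord (i : 'I_d) : measurable_fun setT (fun x : Rd R d => x 0 i).
Proof.
apply: (measurability _ (measurable_realfun.RGenOpens.measurableE R)).
move=> _ [_ [a [b ->] <-]]; rewrite setTI; apply: sub_sigma_algebra.
apply: (proj1 (continuousP _) (@coord_continuous R 1 d 0 i)).
exact: interval_open.
Qed.

Lemma measurable_coord_mul (i j : 'I_d) :
  measurable_fun setT (fun x : Rd R d => x 0 i * x 0 j).
Proof. by apply: measurable_funM; exact: measurable_coord. Qed.

Lemma measurable_ip_diag : measurable_fun setT (fun x : Rd R d => ip x x).
Proof. by apply: measurable_sum => i; exact: measurable_coord_mul. Qed.

Lemma measurable_sphere : measurable (@sphere R d).
Proof.
by rewrite -[@sphere R d]setTI; exact: measurable_ip_diag measurableT _ (measurable_set1 1).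
Qed.

Variables (nu : probability (Rd R d) R) (hnu : nu (@sphere R d) = 1%E).

Lemma probability_sphereC : nu (~` (@sphere R d)) = 0%E.
Proof. by rewrite probability_setC ?hnu ?subee //; exact: measurable_sphere. Qed.

Lemma integral_ip_diag : (\int[nu]_x (ip x x)%:E = 1)%E.
Proof.
rewrite (ae_eq_integral (cst 1%E)) //.
- by rewrite integral_cst // mul1e; exact: probability_setT.
- by apply/measurable_EFinP; exact: measurable_ip_diag.
exists (~` (@sphere R d)); split.
- by apply: measurableC; exact: measurable_sphere.
- exact: probability_sphereC.
by move=> x /= hx; apply: contra_not hx => sx _; rewrite /cst sx.
Qed.

Lemma integrable_coord_mul (i j : 'I_d) :
  nu.-integrable setT (fun x => (x 0 i * x 0 j)%:E).
Proof.
apply: (@le_integrable _ _ _ nu setT measurableT _ (fun x => (ip x x)%:E)).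
- by apply/measurable_EFinP; exact: measurable_coord_mul.
- move=> x _; rewrite !abse_EFin lee_fin (ger0_norm (ip_ge0 x)).
  exact: norm_coord_mul_le_ip.
apply/integrableP; split; first by apply/measurable_EFinP; exact: measurable_ip_diag.
under eq_integral do rewrite abse_EFin ger0_norm ?ip_ge0 //.
by rewrite integral_ip_diag ltry.
Qed.

Definition moment2 : 'M[R]_d :=
  \matrix_(i, j) fine (\int[nu]_x (x 0 i * x 0 j)%:E)%E.

Lemma moment2E (i j : 'I_d) :
  (\int[nu]_x (x 0 i * x 0 j)%:E)%E = (moment2 i j)%:E.
Proof.
by rewrite mxE fineK //; apply: integrable_fin_num => //; exact: integrable_coord_mul.
Qed.

Lemma integral_affine_outer (c : R) (B : 'M[R]_d) :
  (\int[nu]_z (c + mxdot B (outer z z))%:E)%E = (c + mxdot B moment2)%:E.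
Proof.
have intBz i j : nu.-integrable setT (fun z => ((B i j)%:E * (z 0 i * z 0 j)%:E)%E).
  by apply: integrableZl => //; exact: integrable_coord_mul.
transitivity (\int[nu]_z (cst c%:E z +
    \sum_i \sum_j ((B i j)%:E * (z 0 i * z 0 j)%:E)%E)%E)%E.
  apply: eq_integral => z _; rewrite EFinD /mxdot -sumEFin; congr (_ + _)%E.
  by apply: eq_bigr => i _; rewrite -sumEFin; apply: eq_bigr => j _; rewrite mxE EFinM.
rewrite integralD //; last 2 first.
- exact: finite_measure_integrable_cst.
- by apply: integrable_sum => // i _; apply: integrable_sum => // j _; exact: intBz.
rewrite integral_cst // [X in (_ * X)%E]probability_setT mule1.
rewrite (integral_sum measurableT); last first.
  by move=> i; apply: integrable_sum => // j _; exact: intBz.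
rewrite EFinD /mxdot -sumEFin; congr (_ + _)%E; apply: eq_bigr => i _.
rewrite (integral_sum measurableT) // -sumEFin; apply: eq_bigr => j _.
by rewrite integralZl ?moment2E ?EFinM //; exact: integrable_coord_mul.
Qed.

Lemma moment2_sym : (moment2)^T = moment2.
Proof.
apply/matrixP => i j; rewrite !mxE; congr fine.
by apply: eq_integral => x _; rewrite mulrC.
Qed.

Lemma integral_mxdot_outer (B : 'M[R]_d) :
  (\int[nu]_z (mxdot B (outer z z))%:E)%E = (mxdot B (moment2))%:E.
Proof.
rewrite -[mxdot B _]add0r -integral_affine_outer.
by apply: eq_integral => z _; rewrite add0r.
Qed.

Lemma moment2_trace : \tr (moment2) = 1.
Proof.
have := integral_mxdot_outer 1%:M.
under eq_integral do rewrite mxdot_scalar_l mul1r mxtrace_outer.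
by rewrite integral_ip_diag // mxdot_scalar_l mul1r => -[].
Qed.

Lemma moment2_psd (v : 'rV[R]_d) : 0 <= mxdot (outer v v) (moment2).
Proof.
rewrite -lee_fin -integral_mxdot_outer; apply: integral_ge0 => z _.
by rewrite lee_fin -ip_mul_mxdot_outer -expr2 sqr_ge0.
Qed.

Lemma moment2_le1 (v : 'rV[R]_d) : mxdot (outer v v) (moment2) <= ip v v.
Proof.
rewrite -subr_ge0 -[ip v v]mulr1 -moment2_trace -mxdot_scalar_l -mxdotBl.
rewrite -lee_fin -integral_mxdot_outer; apply: integral_ge0 => z _.
rewrite lee_fin mxdotBl mxdot_scalar_l mxtrace_outer -ip_mul_mxdot_outer -expr2.
by rewrite subr_ge0 cauchy_schwarz_ip.
Qed.

End SecondMoment.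

Lemma moment2_isotropic (R : realType) (d : nat) (mu : probability (Rd R d) R) :
  isotropic mu -> moment2 mu = (d%:R^-1)%:M.
Proof.
move=> hiso; apply/matrixP => i j; rewrite !mxE hiso /=.
by case: (i == j); rewrite ?mulr1n ?mulr0n ?mul1r ?mul0r.
Qed.

Definition cubic_energy (R : comPzRingType) (d : nat) (M : 'M[R]_d) : R :=
  1 - 3 * mxdot M M + 2 * mxdot (M *m M) M.

Lemma cubic_energy_scalar (R : comPzRingType) (d : nat) (k : R) :
  cubic_energy (k%:M : 'M[R]_d) = 1 - 3 * k ^+ 2 * d%:R + 2 * k ^+ 3 * d%:R.
Proof.
rewrite /cubic_energy mul_scalar_mx scale_scalar_mx mxdot_scalar_l.
by rewrite mxdot_scalar_r !mxtrace_scalar -[k *+ d]mulr_natr; ring.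
Qed.

Section EnergyFormula.
Variables (R : realType) (d : nat).
Implicit Types (x y z : 'rV[R]_d) (M : 'M[R]_d).

Lemma V2_affine_outer x y z : V2 x y z =
  (1 - ip x y ^+ 2) +
  mxdot ((2 * ip x y) *: outer y x - outer y y - outer x x) (outer z z).
Proof.
by rewrite !(mxdotBl, mxdotZl) -!ip_mul_mxdot_outer /V2; ring.
Qed.

Lemma V2_affine_outer_y M x y :
  (1 - ip x y ^+ 2) + mxdot ((2 * ip x y) *: outer y x - outer y y - outer x x) M =
  (1 - mxdot (outer x x) M) +
  mxdot (2 *: outer x (x *m M^T) - outer x x - M) (outer y y).
Proof.
rewrite !(mxdotBl, mxdotZl) [mxdot (outer y x) M]mxdot_outer [ip y _]ipC.
by rewrite -!ip_mul_mxdot_outer [mxdot (outer y y) M]mxdotC expr2; ring.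
Qed.

Lemma V2_affine_outer_x M x :
  (1 - mxdot (outer x x) M) + mxdot (2 *: outer x (x *m M^T) - outer x x - M) M =
  (1 - mxdot M M) + mxdot (2 *: (M *m M) - 2 *: M) (outer x x).
Proof.
rewrite !(mxdotBl, mxdotZl) [mxdot (outer x (x *m _)) M]mxdot_outer.
by rewrite -mulmxA -trmx_mul -mxdot_outer !(mxdotC (outer x x)); ring.
Qed.

Lemma cubic_energyE M :
  (1 - mxdot M M) + mxdot (2 *: (M *m M) - 2 *: M) M = cubic_energy M.
Proof. by rewrite !(mxdotBl, mxdotZl) /cubic_energy; ring. Qed.

Lemma I_V2_moment2 (nu : probability (Rd R d) R) :
  nu (@sphere R d) = 1%E -> I_V2 nu = (cubic_energy (moment2 nu))%:E.
Proof.
move=> hnu; rewrite /I_V2.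
under eq_integral do under eq_integral do under eq_integral do
  rewrite V2_affine_outer.
under eq_integral do under eq_integral do
  rewrite integral_affine_outer // V2_affine_outer_y.
under eq_integral do rewrite integral_affine_outer // V2_affine_outer_x.
by rewrite integral_affine_outer // cubic_energyE.
Qed.

End EnergyFormula.

Lemma cubic_energy_le_tangent (R : realType) (d : nat) (M : 'M[R]_d) :
  (4 <= d)%N -> M^T = M -> \tr M = 1 ->
  (forall v, mxdot (outer v v) M <= ip v v) ->
  cubic_energy M <= cubic_energy ((d%:R^-1)%:M : 'M[R]_d).
Proof.
move=> d_ge4 M_sym trM M_le1.
have d_gt0 : 0 < d%:R :> R by rewrite ltr0n; apply: leq_trans d_ge4.
have trk (k : R) : \tr (k%:M : 'M[R]_d) = k * d%:R by rewrite mxtrace_scalar mulr_natr.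
set s := d%:R^-1.
set A := M - s%:M; set P := (3 - 4 * s)%:M - 2 *: M.
have P_psd v : 0 <= mxdot (outer v v) P.
  rewrite mxdotBr mxdotZr mxdot_scalar_r mxtrace_outer.
  have s_le : 4 * s <= 1 by rewrite /s ler_pdivrMr // mul1r (ler_nat R 4 d).
  have := M_le1 v; have := ip_ge0 v; nra.
have AtA : A^T *m A = M *m M - (2 * s) *: M + (s * s)%:M.
  have A_sym : A^T = A.
    by apply/matrixP => i j; rewrite !mxE -[in LHS]M_sym mxE eq_sym.
  rewrite A_sym mulmxBl !mulmxBr mul_mx_scalar mul_scalar_mx.
  rewrite mul_scalar_mx scale_scalar_mx; apply/matrixP => i j; rewrite !mxE; ring.
have tangent : cubic_energy (s%:M : 'M[R]_d) - cubic_energy M = mxdot (A^T *m A) P.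
  rewrite AtA cubic_energy_scalar /cubic_energy /P.
  rewrite !(mxdotDl, mxdotBl, mxdotDr, mxdotBr, mxdotNl, mxdotNr, mxdotZl, mxdotZr).
  rewrite [mxdot (M *m M) _]mxdot_scalar_r [mxdot M _%:M]mxdot_scalar_r.
  rewrite [mxdot _%:M M]mxdot_scalar_l mxdot_scalar_l trk trM mxtrace_mulmx_mxdot M_sym.
  by rewrite /s; field; rewrite gt_eqF.
rewrite -subr_ge0 tangent mxdot_gram_rows; apply: sumr_ge0 => k _; exact: P_psd.
Qed.

Section ThreeByThree.
Variable R : realFieldType.

Lemma amgm3 (a b c : R) : 0 <= a -> 0 <= b -> 0 <= c ->
  27 * (a * b * c) <= (a + b + c) ^+ 3.
Proof.
move=> a0 b0 c0.
have schur : 2 * ((a + b + c) ^+ 3 - 27 * (a * b * c)) =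
    (a + b + c) * ((a - b) ^+ 2 + (b - c) ^+ 2 + (a - c) ^+ 2) +
    6 * (a * (b - c) ^+ 2 + b * (a - c) ^+ 2 + c * (a - b) ^+ 2) by ring.
suff : 0 <= 2 * ((a + b + c) ^+ 3 - 27 * (a * b * c)) by rewrite pmulr_rge0 // subr_ge0.
by rewrite schur; repeat (apply: sqr_ge0 || apply: mulr_ge0 || apply: addr_ge0).
Qed.

Lemma psd2_minor (a b p : R) :
  (forall s t, 0 <= a * s ^+ 2 + 2 * p * s * t + b * t ^+ 2) ->
  [/\ 0 <= a, 0 <= b & p ^+ 2 <= a * b].
Proof.
move=> form_ge0.
have a0 : 0 <= a by have := form_ge0 1 0; rewrite expr1n expr0n /= => ?; lra.
have b0 : 0 <= b by have := form_ge0 0 1; rewrite expr1n expr0n /= => ?; lra.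
split => //; have [a_eq0|a_neq0] := eqVneq a 0.
  by have := form_ge0 (- (b + 1)) p; have := sqr_ge0 p; rewrite a_eq0 => ? ?; nra.
have : 0 <= a * (a * b - p ^+ 2) by have := form_ge0 p (- a) => ?; nra.
by rewrite pmulr_rge0 ?lt0r ?a_neq0 // subr_ge0.
Qed.

Lemma det3_le_prod_diag (a b c p q r : R) : 0 <= a -> 0 <= b -> 0 <= c ->
  p ^+ 2 <= a * b -> q ^+ 2 <= a * c ->
  a * b * c + 2 * p * q * r - a * r ^+ 2 - b * q ^+ 2 - c * p ^+ 2 <= a * b * c.
Proof.
move=> a0 b0 c0 pab qac.
have [a_eq0|a_neq0] := eqVneq a 0.
  have p0 : p = 0.
    by apply/eqP; rewrite -sqrf_eq0 eq_le sqr_ge0 andbT; move: pab; rewrite a_eq0 mul0r.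
  have q0 : q = 0.
    by apply/eqP; rewrite -sqrf_eq0 eq_le sqr_ge0 andbT; move: qac; rewrite a_eq0 mul0r.
  by rewrite p0 q0 a_eq0; lra.
have a_gt0 : 0 < a by rewrite lt0r a_neq0.
have sos : a * (a * r ^+ 2 + b * q ^+ 2 + c * p ^+ 2 - 2 * p * q * r) =
  (a * r - p * q) ^+ 2 + q ^+ 2 * (a * b - p ^+ 2) + a * c * p ^+ 2 by ring.
have : 0 <= a * (a * r ^+ 2 + b * q ^+ 2 + c * p ^+ 2 - 2 * p * q * r).
  rewrite sos; apply: addr_ge0; first apply: addr_ge0.
  - exact: sqr_ge0.
  - by apply: mulr_ge0; [exact: sqr_ge0 | rewrite subr_ge0].
  - by apply: mulr_ge0; [apply: mulr_ge0 | exact: sqr_ge0].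
rewrite pmulr_rge0 //; lra.
Qed.

Lemma psd3_det_le (a b c p q r : R) :
  (forall s t u, 0 <= a * s ^+ 2 + b * t ^+ 2 + c * u ^+ 2 +
                      2 * (p * s * t + q * s * u + r * t * u)) ->
  a + b + c = 1 ->
  a * b * c + 2 * p * q * r - a * r ^+ 2 - b * q ^+ 2 - c * p ^+ 2 <= 27^-1.
Proof.
move=> form_ge0 abc1.
have [a0 b0 pab] : [/\ 0 <= a, 0 <= b & p ^+ 2 <= a * b].
  by apply: psd2_minor => s t; have := form_ge0 s t 0 => ?; nra.
have [_ c0 qac] : [/\ 0 <= a, 0 <= c & q ^+ 2 <= a * c].
  by apply: psd2_minor => s u; have := form_ge0 s 0 u => ?; nra.
have := det3_le_prod_diag r a0 b0 c0 pab qac.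
have := amgm3 a0 b0 c0; rewrite abc1 expr1n => ? ?; lra.
Qed.

Lemma big_ord3 (V : nmodType) (F : 'I_3 -> V) :
  \sum_i F i = F (Ordinal (isT : 0 < 3)%N) + F (Ordinal (isT : 1 < 3)%N)
               + F (Ordinal (isT : 2 < 3)%N).
Proof.
by rewrite !big_ord_recl big_ord0 addr0 addrA; congr (F _ + F _ + F _); apply: val_inj.
Qed.

Lemma cubic_energy3_le (M : 'M[R]_3) :
  M^T = M -> \tr M = 1 -> (forall v, 0 <= mxdot (outer v v) M) ->
  cubic_energy M <= cubic_energy ((3%:R^-1)%:M : 'M[R]_3).
Proof.
move=> M_sym trM M_psd.
pose i0 : 'I_3 := Ordinal (isT : 0 < 3)%N; pose i1 : 'I_3 := Ordinal (isT : 1 < 3)%N.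
pose i2 : 'I_3 := Ordinal (isT : 2 < 3)%N.
have Msym i j : M j i = M i j by rewrite -[in LHS]M_sym mxE.
have form_ge0 s t u : 0 <= M i0 i0 * s ^+ 2 + M i1 i1 * t ^+ 2 + M i2 i2 * u ^+ 2 +
    2 * (M i0 i1 * s * t + M i0 i2 * s * u + M i1 i2 * t * u).
  have := M_psd (\row_k [:: s; t; u]`_k); rewrite /mxdot !big_ord3 !mxE /= -/i0 -/i1 -/i2.
  by rewrite (Msym i0 i1) (Msym i0 i2) (Msym i1 i2) => ?; lra.
move: trM; rewrite cubic_energy_scalar /cubic_energy /mxdot /mxtrace.
rewrite !big_ord3 !mxE !big_ord3.
rewrite -/i0 -/i1 -/i2 (Msym i0 i1) (Msym i0 i2) (Msym i1 i2) => trM.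
have := psd3_det_le form_ge0 trM.
move: trM; move: (M i0 i0) (M i1 i1) (M i2 i2) (M i0 i1) (M i0 i2) (M i1 i2).
move=> a b c p q r abc1; have -> : c = 1 - a - b by lra.
(* With c eliminated, the energy is 6 times the determinant: a linear relation
   between monomials. *)
move=> ?; lra.
Qed.

End ThreeByThree.

Theorem theorem4p3 (R : realType) (d : nat) (hd : (3 <= d)%N)
  (mu : probability (Rd R d) R)
  (hmu : mu (@sphere R d) = 1%E) (hiso : isotropic mu)
  (nu : probability (Rd R d) R) (hnu : nu (@sphere R d) = 1%E) :
  (I_V2 nu <= I_V2 mu)%E.
Proof.
rewrite (I_V2_moment2 hnu) (I_V2_moment2 hmu) lee_fin (moment2_isotropic hiso).
have nu_sym := moment2_sym nu; have nu_tr := moment2_trace hnu.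
have [d_eq3|d_ge4] : d = 3%N \/ (4 <= d)%N.
  by move: hd; rewrite leq_eqVlt => /orP[/eqP <-|]; [left | right].
- by subst d; apply: cubic_energy3_le => // v; exact: moment2_psd.
- by apply: cubic_energy_le_tangent => // v; exact: moment2_le1.
Qed.
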